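(* Let $\mathcal{P}$ be a partition of $\{1,\dots,n\}$. A subspace $\mathcal{U}$ of $\mathbb{R}^n$ is not $\mathcal{P}$-realizable if and only if there is a symmetric $\mathcal{P}$-block-diagonal matrix $B$ with $\operatorname{tr}(B)>0$ and $v^TBv\le 0$ for all $v\in\mathcal{U}^\perp$.
   Context: A matrix is $\mathcal{P}$-block-diagonal if it is zero outside the principal submatrices indexed by blocks $\mathcal{I}\in\mathcal{P}$. $\mathcal{E}_{\mathcal{P}}=\{Y\succeq 0: Y_{\mathcal{I}}=I\text{ for all }\mathcal{I}\in\mathcal{P}\}$, with $Y_{\mathcal{I}}$ the principal submatrix indexed by $\mathcal{I}$. $\mathcal{U}$ is $\mathcal{P}$-realizable if some $Y\in\mathcal{E}_{\mathcal{P}}$ has nullspace containing $\mathcal{U}$. *)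

From HB Require Import structures.
From mathcomp Require Import all_boot all_order all_algebra.
From mathcomp Require Import reals.
Set Implicit Arguments. Unset Strict Implicit. Unset Printing Implicit Defensive.
Import Order.TTheory GRing.Theory Num.Theory.
Local Open Scope ring_scope.

Definition psd (R : realType) (n : nat) (Y : 'M[R]_n) : Prop :=
  Y^T = Y /\ forall v : 'rV[R]_n, 0 <= (v *m Y *m v^T) ord0 ord0.

Definition in_EP (R : realType) (n : nat) (P : {set {set 'I_n}}) (Y : 'M[R]_n) : Prop :=
  psd Y /\ forall I, I \in P -> forall i j, i \in I -> j \in I -> Y i j = (i == j)%:R.

(* The subspace U is the row space of the matrix U (rows span U).
   U is P-realizable: some Y in E_P has nullspace containing U, i.e. Y u = 0 for all u in U. *)
Definition realizable (R : realType) (n m : nat) (P : {set {set 'I_n}}) (U : 'M[R]_(m, n)) : Prop :=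
  exists Y : 'M[R]_n, in_EP P Y /\ Y *m U^T = 0.

Definition block_diag (R : realType) (n : nat) (P : {set {set 'I_n}}) (B : 'M[R]_n) : Prop :=
  forall i j, ~~ [exists I in P, (i \in I) && (j \in I)] -> B i j = 0.

Definition in_perp (R : realType) (n m : nat) (U : 'M[R]_(m, n)) (v : 'rV[R]_n) : Prop :=
  U *m v^T = 0.

From HB Require Import structures.
From mathcomp Require Import all_boot all_order all_algebra.
From mathcomp Require Import reals.
From mathcomp Require Import ring lra.
From mathcomp Require boolp classical_sets topology normedtype derive.
Set Implicit Arguments. Unset Strict Implicit. Unset Printing Implicit Defensive.
Import Order.TTheory GRing.Theory Num.Theory.
Local Open Scope ring_scope.

(* Write <A, C> for the Frobenius inner product [frob A C].
   If Y in E_P kills U and B is P-block-diagonal, then <B, Y> = tr B, because the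
   diagonal blocks of Y are identities.  Cholesky elimination writes Y as a sum of
   rank-one matrices r^T r with r in the row space of Y, hence r orthogonal to U,
   so <B, Y> = sum r B r^T <= 0: a certificate B excludes realizability.
   Conversely, minimise the squared distance |I - mask_P Y|^2 over the closed
   convex cone of psd matrices Y with Y U^T = 0, where mask_P keeps the diagonal
   blocks; a minimiser Y exists by compactness once the trace is bounded.  Its
   residual B = I - mask_P Y is P-block-diagonal, and the first-order optimality
   conditions give <B, Z> <= 0 on the cone (so v B v^T <= 0 for v orthogonal to U,
   taking Z = v^T v) and <B, Y> >= 0.  Hence tr B = <B, I> = |B|^2 + <B, Y> > 0,
   unless B = 0, in which case Y itself lies in E_P. *)

Lemma discriminant_le0 (R : realFieldType) (a b c : R) : 0 <= c ->
  (forall t, 0 <= a + 2 * t * b + t ^+ 2 * c) -> b ^+ 2 <= a * c.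
Proof.
rewrite le_eqVlt => /orP[/eqP c0 | c_gt0] nonneg.
  rewrite -c0 mulr0; have [b0|b_neq0] := eqVneq b 0; first by rewrite b0 expr0n.
  have := nonneg (- (a + 1) / (2 * b)); rewrite -c0 mulr0 addr0.
  have -> : a + 2 * (- (a + 1) / (2 * b)) * b = -1 by field.
  by rewrite ler0N1.
have := nonneg (- b / c).
have -> : a + 2 * (- b / c) * b + (- b / c) ^+ 2 * c = (a * c - b ^+ 2) / c.
  by field; rewrite gt_eqF.
by rewrite pmulr_lge0 ?invr_gt0 // subr_ge0.
Qed.

Lemma first_order_le0 (R : realFieldType) (a c : R) :
  (forall t, 0 < t <= 1 -> 2 * t * a <= t ^+ 2 * c) -> a <= 0.
Proof.
move=> small_t; rewrite leNgt; apply/negP => a_gt0.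
have := small_t 1; rewrite ltr01 lexx expr1n mul1r mulr1 => /(_ isT) a2_le_c.
have c_gt0 : 0 < c by lra.
have t_ok : 0 < a / c <= 1 by rewrite divr_gt0 //= ler_pdivrMr // mul1r; lra.
have := small_t _ t_ok.
have -> : (a / c) ^+ 2 * c = a ^+ 2 / c by field; rewrite gt_eqF.
have -> : 2 * (a / c) * a = 2 * (a ^+ 2 / c) by field; rewrite gt_eqF.
have : 0 < a ^+ 2 / c by rewrite divr_gt0 // exprn_gt0.
lra.
Qed.

Section BilinearForm.
Variables (R : comNzRingType) (n : nat).
Implicit Types (Y Z : 'M[R]_n) (v w r : 'rV[R]_n).

Definition bform Y v w : R := (v *m Y *m w^T) 0 0.

Lemma bformDl Y v1 v2 w : bform Y (v1 + v2) w = bform Y v1 w + bform Y v2 w.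
Proof. by rewrite /bform !mulmxDl mxE. Qed.

Lemma bformZl Y a v w : bform Y (a *: v) w = a * bform Y v w.
Proof. by rewrite /bform -!scalemxAl mxE. Qed.

Lemma bformDr Y v w1 w2 : bform Y v (w1 + w2) = bform Y v w1 + bform Y v w2.
Proof. by rewrite /bform linearD /= mulmxDr mxE. Qed.

Lemma bformZr Y a v w : bform Y v (a *: w) = a * bform Y v w.
Proof. by rewrite /bform linearZ /= -scalemxAr mxE. Qed.

Lemma bform_tr Y v w : bform Y^T v w = bform Y w v.
Proof.
rewrite /bform; transitivity ((v *m Y^T *m w^T)^T 0 0); first by rewrite [RHS]mxE.
by rewrite !trmx_mul !trmxK mulmxA.
Qed.

Lemma bformC Y v w : Y^T = Y -> bform Y v w = bform Y w v.
Proof. by move=> sY; rewrite -bform_tr sY. Qed.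

Lemma bformBm Y Z v w : bform (Y - Z) v w = bform Y v w - bform Z v w.
Proof. by rewrite /bform mulmxBr mulmxBl !mxE. Qed.

Lemma bformDm Y Z v w : bform (Y + Z) v w = bform Y v w + bform Z v w.
Proof. by rewrite /bform mulmxDr mulmxDl mxE. Qed.

Lemma bformZm a Y v w : bform (a *: Y) v w = a * bform Y v w.
Proof. by rewrite /bform -scalemxAr -scalemxAl mxE. Qed.

Lemma bform_delta Y i j : bform Y (delta_mx 0 i) (delta_mx 0 j) = Y i j.
Proof. by rewrite /bform -rowE trmx_delta -colE !mxE. Qed.

Lemma bform_rank1 r v w : bform (r^T *m r) v w = bform 1%:M v r * bform 1%:M r w.
Proof. by rewrite /bform !mulmx1 mulmxA -(mulmxA (v *m r^T)) mxE big_ord1. Qed.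

Lemma bform_expand Y v w a : Y^T = Y ->
  bform Y (v + a *: w) (v + a *: w) =
  bform Y v v + 2 * a * bform Y v w + a ^+ 2 * bform Y w w.
Proof. by move=> sY; rewrite bformDl !bformDr !bformZl !bformZr (bformC w v sY); ring. Qed.

End BilinearForm.

Section Frobenius.
Variables (R : comNzRingType) (n : nat).
Implicit Types (A B C : 'M[R]_n).

Definition frob A C : R := \sum_(k : 'I_n * 'I_n) A k.1 k.2 * C k.1 k.2.

Lemma frobC A C : frob A C = frob C A.
Proof. by apply: eq_bigr => k _; rewrite mulrC. Qed.

Lemma frobDr C A B : frob C (A + B) = frob C A + frob C B.
Proof. by rewrite /frob -big_split; apply: eq_bigr => k _; rewrite mxE mulrDr. Qed.

Lemma frobZr C a A : frob C (a *: A) = a * frob C A.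
Proof. by rewrite /frob mulr_sumr; apply: eq_bigr => k _; rewrite mxE mulrCA. Qed.

Lemma frob0r C : frob C 0 = 0.
Proof. by rewrite /frob big1 // => k _; rewrite mxE mulr0. Qed.

Lemma frobDl A B C : frob (A + B) C = frob A C + frob B C.
Proof. by rewrite frobC frobDr !(frobC C). Qed.

Lemma frobZl a A C : frob (a *: A) C = a * frob A C.
Proof. by rewrite frobC frobZr frobC. Qed.

Lemma frob_sumr I (s : seq I) (F : I -> 'M[R]_n) C :
  frob C (\sum_(x <- s) F x) = \sum_(x <- s) frob C (F x).
Proof. exact: (big_morph _ (frobDr C) (frob0r C)). Qed.

Lemma frob_expand A B a :
  frob (A + a *: B) (A + a *: B) = frob A A + 2 * a * frob A B + a ^+ 2 * frob B B.
Proof. by rewrite frobDl !frobDr !frobZl !frobZr (frobC B A); ring. Qed.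

Lemma frob1r A : frob A 1%:M = \tr A.
Proof.
rewrite /frob /mxtrace -(pair_big xpredT xpredT (fun i j => A i j * 1%:M i j)) /=.
apply: eq_bigr => i _; rewrite (bigD1 i) //= mxE eqxx mulr1 big1 ?addr0 // => j ji.
by rewrite mxE eq_sym (negbTE ji) mulr0.
Qed.

Lemma frob_rank1 A v : frob A (v^T *m v) = bform A v v.
Proof.
rewrite /frob /bform -(pair_big xpredT xpredT (fun i j => A i j * (v^T *m v) i j)) /=.
rewrite mxE exchange_big /=; apply: eq_bigr => i _.
rewrite mxE mulr_suml; apply: eq_bigr => j _.
by rewrite !mxE big_ord1 !mxE; ring.
Qed.

End Frobenius.

Section FrobeniusNorm.
Variables (R : realDomainType) (n : nat).

Lemma frob_ge0 (A : 'M[R]_n) : 0 <= frob A A.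
Proof. by apply: sumr_ge0 => k _; rewrite -expr2 sqr_ge0. Qed.

Lemma frob_eq0 (A : 'M[R]_n) : frob A A = 0 -> A = 0.
Proof.
move=> A0; apply/matrixP => i j; rewrite mxE.
have sq_ge0 (k : 'I_n * 'I_n) : 0 <= A k.1 k.2 * A k.1 k.2 by rewrite -expr2 sqr_ge0.
have /(_ (i, j) isT) /eqP := psumr_eq0P (fun k _ => sq_ge0 k) A0.
by rewrite mulf_eq0 orbb => /eqP.
Qed.

End FrobeniusNorm.

Section Psd.
Variables (R : realType) (n : nat).
Implicit Types (Y Z : 'M[R]_n) (v r : 'rV[R]_n).

Lemma psd_bform_ge0 Y v : psd Y -> 0 <= bform Y v v.
Proof. by case=> _; apply. Qed.

Lemma psd_entryC Y i j : psd Y -> Y i j = Y j i.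
Proof. by case=> sY _; rewrite -[in LHS]sY mxE. Qed.

Lemma psd_diag_ge0 Y i : psd Y -> 0 <= Y i i.
Proof. by move=> /(psd_bform_ge0 (delta_mx 0 i)); rewrite bform_delta. Qed.

Lemma psd_cauchy_schwarz Y v i : psd Y ->
  bform Y v (delta_mx 0 i) ^+ 2 <= bform Y v v * Y i i.
Proof.
move=> pY; apply: discriminant_le0; first exact: psd_diag_ge0.
move=> t; have := psd_bform_ge0 (v + t *: delta_mx 0 i) pY.
by rewrite bform_expand ?bform_delta //; case: pY.
Qed.

Lemma psd_row0 Y i j : psd Y -> Y i i = 0 -> Y i j = 0.
Proof.
move=> pY Yii0; have := psd_cauchy_schwarz (delta_mx 0 j) i pY.
rewrite Yii0 mulr0 bform_delta (psd_entryC j i pY) => sq_le0.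
by apply/eqP; rewrite -sqrf_eq0 eq_le sq_le0 sqr_ge0.
Qed.

Lemma psd_rank1 r : psd (r^T *m r).
Proof.
split=> [|v]; first by rewrite trmx_mul trmxK.
by rewrite -/(bform _ v v) bform_rank1 (bformC r v (trmx1 _ _)) -expr2 sqr_ge0.
Qed.

Lemma psd0 : psd (0 : 'M[R]_n).
Proof. by split=> [|v]; rewrite ?trmx0 // -/(bform _ v v) /bform mulmx0 mul0mx mxE. Qed.

Lemma psdD Y Z : psd Y -> psd Z -> psd (Y + Z).
Proof.
move=> pY pZ; split=> [|v]; first by rewrite linearD /=; case: pY => -> _; case: pZ => ->.
by rewrite -/(bform _ v v) bformDm addr_ge0 //; apply: psd_bform_ge0.
Qed.

Lemma psdZ a Y : 0 <= a -> psd Y -> psd (a *: Y).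
Proof.
move=> a_ge0 pY; split=> [|v]; first by rewrite linearZ /=; case: pY => ->.
by rewrite -/(bform _ v v) bformZm mulr_ge0 //; apply: psd_bform_ge0.
Qed.

Lemma psd_diag_le_trace Y i : psd Y -> Y i i <= \tr Y.
Proof.
move=> pY; rewrite /mxtrace (bigD1 i) //= lerDl.
by apply: sumr_ge0 => j _; apply: psd_diag_ge0.
Qed.

Lemma psd_entry_le_trace Y i j : psd Y -> `|Y i j| <= \tr Y.
Proof.
move=> pY; have sY : Y^T = Y by case: pY.
have := psd_bform_ge0 (delta_mx 0 i + 1 *: delta_mx 0 j) pY.
have := psd_bform_ge0 (delta_mx 0 i + (-1) *: delta_mx 0 j) pY.
rewrite !bform_expand // !bform_delta sqrrN expr1n.
have := psd_diag_le_trace i pY; have := psd_diag_le_trace j pY.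
by rewrite ler_norml => *; apply/andP; split; lra.
Qed.

End Psd.

(* [Y - (pivot_row Y i)^T *m pivot_row Y i] is one step of outer-product Cholesky
   elimination: it clears row and column i and stays psd (a Schur complement). *)
Definition pivot_row (R : realType) n (Y : 'M[R]_n) i : 'rV[R]_n :=
  (Num.sqrt (Y i i))^-1 *: row i Y.

Section Pivot.
Variables (R : realType) (n : nat) (Y : 'M[R]_n) (i : 'I_n).
Hypotheses (pY : psd Y) (Yii_gt0 : 0 < Y i i).

Let p := pivot_row Y i.

Lemma pivot_row_rank1 : p^T *m p = (Y i i)^-1 *: ((row i Y)^T *m row i Y).
Proof.
rewrite /p /pivot_row [(_ *: row i Y)^T]linearZ /= -scalemxAl -scalemxAr scalerA.
by rewrite -invfM -expr2 sqr_sqrtr // ltW.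
Qed.

Lemma bform_row v : bform 1%:M v (row i Y) = bform Y v (delta_mx 0 i).
Proof. by case: pY => sY _; rewrite /bform mulmx1 rowE trmx_mul sY mulmxA. Qed.

Lemma psd_sub_pivot : psd (Y - p^T *m p).
Proof.
have [sY _] := pY; split=> [|v].
  by rewrite linearB /= trmx_mul trmxK sY.
rewrite -/(bform _ v v) bformBm pivot_row_rank1 bformZm bform_rank1.
rewrite (bformC _ v (trmx1 _ _)) bform_row -expr2 subr_ge0 ler_pdivrMl //.
by rewrite mulrC; apply: psd_cauchy_schwarz.
Qed.

Lemma sub_pivot_entry j k : (Y - p^T *m p) j k = Y j k - Y i j * Y i k / Y i i.
Proof. by rewrite pivot_row_rank1 !mxE big_ord1 !mxE; field; rewrite gt_eqF. Qed.

Lemma sub_pivot_diag_pivot : (Y - p^T *m p) i i = 0.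
Proof. by rewrite sub_pivot_entry; field; rewrite gt_eqF. Qed.

Lemma sub_pivot_diag0 j : Y j j = 0 -> (Y - p^T *m p) j j = 0.
Proof.
move=> Yjj0; have Yij0 : Y i j = 0 by rewrite (psd_entryC i j pY) psd_row0.
by rewrite sub_pivot_entry Yij0 Yjj0 !mul0r subr0.
Qed.

Lemma pivot_row_sub : (p <= Y)%MS.
Proof. by rewrite /p /pivot_row scalemx_sub ?row_sub. Qed.

Lemma sub_pivot_sub : (Y - p^T *m p <= Y)%MS.
Proof.
by rewrite addmx_sub ?submx_refl // eqmx_opp (submx_trans (submxMl _ _)) ?pivot_row_sub.
Qed.

End Pivot.

Lemma psd_rank1_decomposition (R : realType) n (Y : 'M[R]_n) : psd Y ->
  exists rs : seq 'rV[R]_n, Y = \sum_(r <- rs) r^T *m r /\ all (fun r => r <= Y)%MS rs.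
Proof.
have [k] := ubnP #|[set j | Y j j != 0]|; elim: k Y => // k IH Y supp_lt pY.
have [Y0|[i Yii_neq0]] : Y = 0 \/ exists i, Y i i != 0.
  case: (pickP (fun j => Y j j != 0)) => [i Yii|diag0]; first by right; exists i.
  left; apply/matrixP => a b; rewrite mxE psd_row0 //.
  by apply/eqP; rewrite -[_ == 0]negbK diag0.
  by exists [::]; rewrite Y0 big_nil.
have Yii_gt0 : 0 < Y i i by rewrite lt_def Yii_neq0 psd_diag_ge0.
pose Y' := Y - (pivot_row Y i)^T *m pivot_row Y i.
have supp_lt' : (#|[set j | Y' j j != 0%R]| < k)%N.
  rewrite -ltnS (leq_trans _ supp_lt) // ltnS proper_card //; apply/properP; split.
    apply/subsetP => j; rewrite !inE; apply: contra => /eqP Yjj0.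
    by rewrite /Y' sub_pivot_diag0.
  by exists i; rewrite !inE ?Yii_neq0 // /Y' sub_pivot_diag_pivot ?eqxx.
have [rs [Y'E rsY']] := IH Y' supp_lt' (psd_sub_pivot pY Yii_gt0).
exists (pivot_row Y i :: rs); split; first by rewrite big_cons -Y'E /Y' addrC subrK.
rewrite /= pivot_row_sub //=; apply/allP => r /(allP rsY') rY'.
exact: submx_trans rY' (sub_pivot_sub _ _).
Qed.

Lemma frob_psd_le0 (R : realType) n p (W : 'M[R]_(n, p)) (B Y : 'M[R]_n) :
  (forall v, v *m W = 0 -> bform B v v <= 0) -> psd Y -> Y *m W = 0 -> frob B Y <= 0.
Proof.
move=> B_le0 pY YW; have [rs [Ydef rsY]] := psd_rank1_decomposition pY.
rewrite Ydef frob_sumr big_seq; apply: sumr_le0 => r r_rs; rewrite frob_rank1 B_le0 //.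
by have /submxP[D ->] := allP rsY r r_rs; rewrite -mulmxA YW mulmx0.
Qed.

Definition same_block n (P : {set {set 'I_n}}) i j := [exists I in P, (i \in I) && (j \in I)].

Lemma same_blockC n (P : {set {set 'I_n}}) i j : same_block P i j = same_block P j i.
Proof. by apply/existsP/existsP => -[I /and3P[IP iI jI]]; exists I; rewrite IP iI jI. Qed.

Lemma same_block_refl n (P : {set {set 'I_n}}) i :
  cover P = [set: 'I_n] -> same_block P i i.
Proof.
move=> coverP; have /bigcupP[I IP iI] : i \in cover P by rewrite coverP inE.
by apply/existsP; exists I; rewrite IP iI.
Qed.

Section BlockMask.
Variables (R : comNzRingType) (n : nat) (P : {set {set 'I_n}}).
Implicit Types (Y Z : 'M[R]_n).

Definition block_mask Y : 'M[R]_n := \matrix_(i, j) if same_block P i j then Y i j else 0.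

Definition block_residual Y := 1%:M - block_mask Y.

Definition block_gap Y := frob (block_residual Y) (block_residual Y).

Lemma block_maskD Y Z : block_mask (Y + Z) = block_mask Y + block_mask Z.
Proof. by apply/matrixP => i j; rewrite !mxE; case: same_block; rewrite ?addr0. Qed.

Lemma block_maskZ a Y : block_mask (a *: Y) = a *: block_mask Y.
Proof. by apply/matrixP => i j; rewrite !mxE; case: same_block; rewrite ?mulr0. Qed.

Lemma block_mask0 : block_mask 0 = 0.
Proof. by apply/matrixP => i j; rewrite !mxE if_same. Qed.

Lemma block_residual_tr Y : Y^T = Y -> (block_residual Y)^T = block_residual Y.
Proof.
move=> sY; apply/matrixP => i j; have Yji : Y j i = Y i j by rewrite -[in LHS]sY mxE.
by rewrite !mxE same_blockC eq_sym Yji.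
Qed.

Lemma block_gap_perturb Y Z a :
  block_gap (Y + a *: Z) =
  block_gap Y - 2 * a * frob (block_residual Y) (block_mask Z)
  + a ^+ 2 * frob (block_mask Z) (block_mask Z).
Proof.
rewrite /block_gap.
have -> : block_residual (Y + a *: Z) = block_residual Y + (- a) *: block_mask Z.
  by rewrite /block_residual block_maskD block_maskZ scaleNr opprD addrA.
by rewrite frob_expand sqrrN; ring.
Qed.

Lemma block_gap0 : block_gap 0 = n%:R.
Proof. by rewrite /block_gap /block_residual block_mask0 subr0 frob1r mxtrace1. Qed.

End BlockMask.

Section BlockDiag.
Variables (R : realType) (n : nat) (P : {set {set 'I_n}}).
Implicit Types (B Y : 'M[R]_n).

Lemma frob_block_mask B Y : block_diag P B -> frob B (block_mask P Y) = frob B Y.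
Proof.
move=> bB; apply: eq_bigr => k _; rewrite mxE /same_block.
by case: ifPn => // /bB ->; rewrite !mul0r.
Qed.

Lemma block_diag_residual Y : cover P = [set: 'I_n] -> block_diag P (block_residual P Y).
Proof.
move=> coverP i j not_ij; rewrite !mxE /same_block (negbTE not_ij) subr0.
by case: eqVneq not_ij => // -> /negP[]; apply: same_block_refl.
Qed.

Lemma block_mask_in_EP Y : in_EP P Y -> block_mask P Y = block_mask P 1%:M.
Proof.
case=> _ Yblocks; apply/matrixP => i j; rewrite !mxE.
by case: ifPn => // /existsP[I /and3P[IP iI jI]]; rewrite (Yblocks I).
Qed.

Lemma frob_in_EP B Y : block_diag P B -> in_EP P Y -> frob B Y = \tr B.
Proof.
move=> bB EP_Y; rewrite -(frob_block_mask _ bB) block_mask_in_EP //.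
by rewrite frob_block_mask // frob1r.
Qed.

Lemma block_residual_eq0 Y : psd Y -> block_residual P Y = 0 -> in_EP P Y.
Proof.
move=> pY res0; split=> // I IP i j iI jI.
have /matrixP/(_ i j) := res0; rewrite !mxE.
have -> : same_block P i j by apply/existsP; exists I; rewrite IP iI jI.
by move/eqP; rewrite subr_eq0 => /eqP.
Qed.

End BlockDiag.

Lemma trace_le_block_gap (R : realFieldType) n (P : {set {set 'I_n}}) (Y : 'M[R]_n) :
  cover P = [set: 'I_n] -> \tr Y - 2 * n%:R <= block_gap P Y.
Proof.
move=> coverP.
have -> : \tr Y - 2 * n%:R = \sum_(k : 'I_n * 'I_n) (if k.1 == k.2 then Y k.1 k.1 - 2 else 0).
  rewrite -(pair_big xpredT xpredT (fun i j => if i == j then Y i i - 2 else 0)) /=.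
  have -> : 2 * n%:R = \sum_(i < n) (2 : R) by rewrite sumr_const card_ord mulr_natr.
  rewrite /mxtrace -sumrB.
  apply: eq_bigr => i _; rewrite (bigD1 i) //= eqxx big1 ?addr0 // => j.
  by rewrite eq_sym => /negbTE ->.
apply: ler_sum => -[i j] _ /=; case: eqVneq => [<-|_]; last by rewrite -expr2 sqr_ge0.
rewrite !mxE eqxx same_block_refl //.
have : 0 <= (Y i i - 3 / 2) ^+ 2 by rewrite sqr_ge0.
rewrite [true%:R]/=; nra.
Qed.

Section Compactness.
Import boolp classical_sets topology normedtype derive numFieldNormedType.Exports.
Local Open Scope classical_set_scope.

Lemma closed_forall (T : topologicalType) (R : realType) I (g : I -> T -> R) (A : set R) :
  closed A -> (forall k, continuous (g k)) -> closed [set x | forall k, A (g k x)].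
Proof.
move=> clA g_cont.
have -> : [set x | forall k, A (g k x)] = \bigcap_(k in setT) (g k @^-1` A).
  by apply/seteqP; split=> x /= Ax k; [move=> _|]; exact: Ax.
by apply: closed_bigI => k _; exact: (continuous_closedP _).1 (g_cont k) _ clA.
Qed.

Section VecMxContinuity.
Variables (R : realType) (n : nat).

Lemma continuous_vec_mx_entry i j : continuous (fun x : 'rV[R]_(n * n) => vec_mx x i j).
Proof.
have -> : (fun x : 'rV[R]_(n * n) => vec_mx x i j) = fun x => x 0 (mxvec_index i j).
  by apply: funext => x; rewrite mxE.
exact: coord_continuous.
Qed.

Lemma continuous_sum (T : topologicalType) I (s : seq I) (F : I -> T -> R) :
  (forall k, continuous (F k)) -> continuous (fun x => \sum_(k <- s) F k x).
Proof. by move=> F_cont; apply: continuous_big => [|k _]; [exact: add_continuous | exact: F_cont]. Qed.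

Lemma continuous_subr (T : topologicalType) (f g : T -> R) :
  continuous f -> continuous g -> continuous (fun x => f x - g x).
Proof. by move=> f_cont g_cont x; apply: continuousB; [exact: f_cont | exact: g_cont]. Qed.

Lemma continuous_mulmx_vec_mx p q (A : 'M[R]_(p, n)) (C : 'M[R]_(n, q)) a b :
  continuous (fun x : 'rV[R]_(n * n) => (A *m vec_mx x *m C) a b).
Proof.
have -> : (fun x : 'rV[R]_(n * n) => (A *m vec_mx x *m C) a b) =
    fun x => \sum_j (\sum_k A a k * vec_mx x k j) * C j b.
  by apply: funext => x; rewrite !mxE; apply: eq_bigr => j _; rewrite mxE.
apply: continuous_sum => j x; apply: continuousM; last exact: cst_continuous.
apply: continuous_sum => k y; apply: continuousM; first exact: cst_continuous.
exact: continuous_vec_mx_entry.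
Qed.

End VecMxContinuity.

Section PsdKernelMin.
Variables (R : realType) (n p : nat) (W : 'M[R]_(n, p)).

(* Matrices enter through [vec_mx], as compactness is available for row vectors. *)
Definition psd_kernel_trace_le (c : R) :=
  [set x : 'rV[R]_(n * n) | [/\ psd (vec_mx x), vec_mx x *m W = 0 & \tr (vec_mx x) <= c]].

Lemma closed_psd_kernel_trace_le c : closed (psd_kernel_trace_le c).
Proof.
have -> : psd_kernel_trace_le c =
    [set x | forall k : 'I_n * 'I_n, [set y : R | y = 0] (vec_mx x k.2 k.1 - vec_mx x k.1 k.2)]
    `&` [set x | forall v : 'rV_n, [set y : R | 0 <= y] (bform (vec_mx x) v v)]
    `&` [set x | forall k : 'I_n * 'I_p, [set y : R | y = 0] ((vec_mx x *m W) k.1 k.2)]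
    `&` [set x | forall k : unit, [set y : R | 0 <= y] (c - \tr (vec_mx x))].
  apply/seteqP; split=> x /=.
    case=> -[sY qY] YW trY; split; [split; [split|]|] => //.
    - by move=> k; rewrite -[in X in X - _]sY mxE subrr.
    - by move=> k; rewrite YW mxE.
    - by move=> _; rewrite subr_ge0.
  case=> -[[sY qY] YW] /(_ tt); rewrite subr_ge0 => trY; split=> //; last first.
    by apply/matrixP => i j; rewrite (YW (i, j)) mxE.
  split=> //; apply/matrixP => i j; apply/eqP; rewrite mxE -subr_eq0.
  by apply/eqP; exact: (sY (i, j)).
apply: closedI; [apply: closedI; [apply: closedI|]|];
  apply: closed_forall; rewrite ?closed_eq ?closed_ge // => k.
- by apply: continuous_subr; apply: continuous_vec_mx_entry.
- exact: continuous_mulmx_vec_mx.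
- have -> : (fun x => (vec_mx x *m W) k.1 k.2) = fun x => (1%:M *m vec_mx x *m W) k.1 k.2.
    by apply: funext => x; rewrite mul1mx.
  exact: continuous_mulmx_vec_mx.
- apply: continuous_subr; first exact: cst_continuous.
  by apply: continuous_sum => i; apply: continuous_vec_mx_entry.
Qed.

Lemma compact_psd_kernel_trace_le c : compact (psd_kernel_trace_le c).
Proof.
have box := rV_compact (n := n * n) (fun=> @segment_compact R (- c) c).
apply: (subclosed_compact (@closed_psd_kernel_trace_le c) box) => x [pY _ trY] k /=.
case/mxvec_indexP: k => i j; have -> : x 0 (mxvec_index i j) = vec_mx x i j by rewrite mxE.
by rewrite in_itv /= -ler_norml (le_trans (psd_entry_le_trace i j pY)).
Qed.

Lemma psd_kernel_trace_le_argmin (f : 'M[R]_n -> R) c :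
  continuous (fun x => f (vec_mx x)) -> 0 <= c ->
  exists Y, [/\ psd Y, Y *m W = 0 &
    forall Z, psd Z -> Z *m W = 0 -> \tr Z <= c -> f Y <= f Z].
Proof.
move=> f_cont c_ge0.
have feasible0 : psd_kernel_trace_le c !=set0.
  by exists 0; rewrite /psd_kernel_trace_le /= linear0 mul0mx mxtrace0; split=> //; exact: psd0.
have [x /set_mem[pY YW _] x_min] := compact_EVT_min feasible0
  (@compact_psd_kernel_trace_le c) (continuous_subspaceT f_cont).
exists (vec_mx x); split=> // Z pZ ZW trZ.
have := x_min (mxvec Z); rewrite mxvecK; apply; apply/mem_set.
by rewrite /psd_kernel_trace_le /= mxvecK.
Qed.

End PsdKernelMin.

Lemma continuous_block_gap (R : realType) n (P : {set {set 'I_n}}) :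
  continuous (fun x : 'rV[R]_(n * n) => block_gap P (vec_mx x)).
Proof.
have res_cont i j : continuous (fun x : 'rV[R]_(n * n) => block_residual P (vec_mx x) i j).
  have -> : (fun x : 'rV[R]_(n * n) => block_residual P (vec_mx x) i j) =
      fun x => (i == j)%:R - (if same_block P i j then vec_mx x i j else 0).
    by apply: funext => x; rewrite !mxE.
  apply: continuous_subr; first exact: cst_continuous.
  by case: same_block; [apply: continuous_vec_mx_entry | apply: cst_continuous].
rewrite /block_gap /frob; apply: continuous_sum => k x.
by apply: continuousM; apply: res_cont.
Qed.

End Compactness.

Section BlockGapArgmin.
Variables (R : realType) (n p : nat) (P : {set {set 'I_n}}) (W : 'M[R]_(n, p)) (Y : 'M[R]_n).
Hypotheses (coverP : cover P = [set: 'I_n]) (pY : psd Y) (YW : Y *m W = 0).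
Hypothesis Y_min : forall Z, psd Z -> Z *m W = 0 -> block_gap P Y <= block_gap P Z.

Lemma block_gap_argmin_first_order Z :
  (forall t, 0 < t <= 1 -> psd (Y + t *: Z)) -> Z *m W = 0 ->
  frob (block_residual P Y) Z <= 0.
Proof.
move=> pYtZ ZW; rewrite -(frob_block_mask _ (block_diag_residual _ coverP)).
apply: (@first_order_le0 _ _ (frob (block_mask P Z) (block_mask P Z))) => t t01.
have := Y_min (pYtZ t t01); rewrite mulmxDl -scalemxAl ZW YW scaler0 addr0.
by move=> /(_ erefl); rewrite block_gap_perturb; lra.
Qed.

Lemma frob_block_residual_le0 Z : psd Z -> Z *m W = 0 -> frob (block_residual P Y) Z <= 0.
Proof.
move=> pZ; apply: block_gap_argmin_first_order => t /andP[t_gt0 _].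
by apply: psdD => //; apply: psdZ => //; apply: ltW.
Qed.

Lemma frob_block_residual_ge0 : 0 <= frob (block_residual P Y) Y.
Proof.
rewrite -oppr_le0 -mulN1r -frobZr scaleN1r.
apply: block_gap_argmin_first_order; last by rewrite mulNmx YW oppr0.
move=> t /andP[_ t_le1]; rewrite scalerN -scaleNr -{1}[Y]scale1r -scalerDl.
by apply: psdZ => //; rewrite subr_ge0.
Qed.

Lemma trace_block_residual :
  \tr (block_residual P Y) =
  frob (block_residual P Y) (block_residual P Y) + frob (block_residual P Y) Y.
Proof.
rewrite -frob1r -[in LHS](subrK (block_mask P Y) 1%:M) frobDr.
by rewrite frob_block_mask //; apply: block_diag_residual.
Qed.

Lemma trace_block_residual_gt0 : ~ in_EP P Y -> 0 < \tr (block_residual P Y).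
Proof.
move=> notEP; rewrite trace_block_residual ltr_wpDr ?frob_block_residual_ge0 //.
rewrite lt_def frob_ge0 andbT; apply/eqP => /frob_eq0 res0.
by apply: notEP; apply: block_residual_eq0.
Qed.

End BlockGapArgmin.

Lemma exists_block_gap_argmin (R : realType) n p (P : {set {set 'I_n}}) (W : 'M[R]_(n, p)) :
  cover P = [set: 'I_n] ->
  exists Y, [/\ psd Y, Y *m W = 0 &
    forall Z, psd Z -> Z *m W = 0 -> block_gap P Y <= block_gap P Z].
Proof.
move=> coverP; have n_ge0 : 0 <= n%:R :> R by [].
have [|Y [pY YW Y_min]] := psd_kernel_trace_le_argmin W (continuous_block_gap (P := P)) (c := 3 * n%:R).
  by rewrite mulr_ge0.
exists Y; split=> // Z pZ ZW; have [trZ_le|trZ_gt] := lerP (\tr Z) (3 * n%:R).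
  exact: Y_min.
(* Beyond the trace bound, [block_gap P Z >= \tr Z - 2n > n = block_gap P 0]. *)
have := Y_min 0 (psd0 _ _); rewrite mul0mx mxtrace0 block_gap0 mulr_ge0 // => /(_ erefl isT).
by have := trace_le_block_gap Z coverP; lra.
Qed.

Lemma in_perp_mulmx (R : realType) n m (U : 'M[R]_(m, n)) v : in_perp U v <-> v *m U^T = 0.
Proof.
rewrite /in_perp -[U *m v^T]trmxK trmx_mul trmxK.
by split=> [/(congr1 trmx)|->]; rewrite ?trmxK trmx0.
Qed.

Theorem lemma5p5 (R : realType) (n m : nat) (P : {set {set 'I_n}})
    (U : 'M[R]_(m, n)) :
  partition P [set: 'I_n] ->
  (~ realizable P U <->
   exists B : 'M[R]_n,
     [/\ B^T = B, block_diag P B, 0 < \tr B &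
         forall v : 'rV[R]_n, in_perp U v -> (v *m B *m v^T) ord0 ord0 <= 0]).
Proof.
case/and3P=> /eqP coverP _ _; split=> [notR | [B [_ bB trB B_le0]] [Y [EP_Y YU]]].
  have [Y [pY YU Y_min]] := exists_block_gap_argmin U^T coverP.
  exists (block_residual P Y); split.
  - by apply: block_residual_tr; case: pY.
  - exact: block_diag_residual.
  - by apply: (trace_block_residual_gt0 coverP pY YU Y_min) => EP_Y; apply: notR; exists Y.
  - move=> v /in_perp_mulmx vU; rewrite -/(bform _ v v) -frob_rank1.
    apply: (frob_block_residual_le0 coverP pY YU Y_min); first exact: psd_rank1.
    by rewrite -mulmxA vU mulmx0.
have B_le0' v : v *m U^T = 0 -> bform B v v <= 0 by move/in_perp_mulmx; apply: B_le0.
by have := frob_psd_le0 B_le0' EP_Y.1 YU; rewrite (frob_in_EP bB EP_Y); lra.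
Qed.
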